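(* Let $\Gamma$ be a non-trivial finite group and let $G=\Gamma^\omega$, the countable product of copies of $\Gamma$, equipped with the product topology (each factor discrete) and its normalized Haar measure. Then $G$ has $2^{\mathfrak c}$ distinct dense subgroups that are not Haar measurable, where $\mathfrak c=2^{\aleph_0}$.
   Context: Haar measurability refers to the completed normalized Haar measure on the compact group $G$. *)

From HB Require Import structures.
From mathcomp Require Import all_boot all_order all_algebra all_fingroup.
From mathcomp Require Import all_classical all_reals all_analysis.

Set Implicit Arguments.
Unset Strict Implicit.
Unset Printing Implicit Defensive.

Import Order.TTheory GRing.Theory Num.Theory.
Local Open Scope classical_set_scope.

Definition cantor_group (gT : finGroupType) : Type :=
  {ptws nat -> discrete_topology gT}.

Section CantorGroup.
Variable gT : finGroupType.
Local Notation G := (cantor_group gT).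

Definition gmul (x y : G) : G := fun i => (x i * y i)%g.
Definition ginv (x : G) : G := fun i => ((x i)^-1)%g.
Definition gone : G := fun _ => 1%g.

Definition is_subgroup (H : set G) : Prop :=
  H gone /\ (forall x y, H x -> H y -> H (gmul x y)) /\
  (forall x, H x -> H (ginv x)).

Definition borel_set (B : set G) : Prop := <<s (@open G) >> B.

(** Basic cylinder: all x agreeing with w on the first n coordinates.
    Its normalized Haar measure is |Gamma|^(-n). *)
Definition cylinder (n : nat) (w : G) : set G :=
  [set x | forall i, (i < n)%N -> x i = w i].

Definition cylinder_measure (n : nat) : rat :=
  (((#|gT| ^ n)%N)%:R)^-1.

(** Null sets for the (outer) normalized Haar measure: for every eps = 1/(k+1)
    the set is covered by countably many cylinders of total measure <= eps. *)
Definition haar_null (N : set G) : Prop :=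
  forall k : nat, exists (ns : nat -> nat) (ws : nat -> G),
    N `<=` \bigcup_i cylinder (ns i) (ws i) /\
    forall m : nat, (\sum_(i < m) cylinder_measure (ns i) <= (k.+1%:R)^-1)%R.

(** Measurable for the completed normalized Haar measure: differs from a
    Borel set by a null set. *)
Definition haar_measurable (A : set G) : Prop :=
  exists B, borel_set B /\ haar_null ((A `\` B) `|` (B `\` A)).

End CantorGroup.

From HB Require Import structures.
From mathcomp Require Import all_boot all_order all_algebra all_fingroup.
From mathcomp Require Import all_classical all_reals all_analysis.
From mathcomp Require Import ring Rstruct.

(* For a nonprincipal ultrafilter U on nat, the set H_U of sequences that are
   U-almost everywhere 1 is a dense subgroup of G = Gamma^nat, and it is
   invariant under translation by finitely supported elements.  By a zero-one
   law (translation invariance makes a measurable B independent of every set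
   determined by finitely many coordinates, hence of itself), a measurable set
   that is invariant up to null sets has measure 0 or 1.  Neither is possible
   for H_U: its translates by the constant sequences cover G, while H_U and
   H_U a are disjoint for a <> 1.  Distinct ultrafilters give distinct H_U,
   and an independent family of subsets of nat indexed by 2^nat yields 2^c
   ultrafilters.  The Haar measure is obtained by Caratheodory extension of
   the uniform content on sets determined by finitely many coordinates, whose
   sigma-additivity comes from compactness. *)

Set Implicit Arguments.
Unset Strict Implicit.
Unset Printing Implicit Defensive.

Import Order.TTheory GRing.Theory Num.Theory.
Local Open Scope classical_set_scope.

(* [cantor_group gT] pointed at the unit, as required by [compact_cover] and by
   measurable types; it also carries the algebra of determined sets below. *)
Definition cantorT (gT : finGroupType) := cantor_group gT.
HB.instance Definition _ (gT : finGroupType) := Topological.on (cantorT gT).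
HB.instance Definition _ (gT : finGroupType) :=
  isPointed.Build (cantorT gT) (fun _ => 1%g).

Section Determined.
Variable gT : finGroupType.
Local Notation q := #|gT|.

Definition determined n (A : set (cantorT gT)) :=
  forall x y, (forall i, (i < n)%N -> x i = y i) -> A x -> A y.

Definition pad n (u : {ffun 'I_n -> gT}) : cantorT gT :=
  fun i => if @insub _ (fun k => (k < n)%N) _ i is Some j then u j else 1%g.

Lemma pad_lt n (u : {ffun 'I_n -> gT}) i (lt_in : (i < n)%N) :
  pad u i = u (Ordinal lt_in).
Proof. by rewrite /pad insubT. Qed.

Lemma pad_ord n (u : {ffun 'I_n -> gT}) (i : 'I_n) : pad u i = u i.
Proof. by rewrite (pad_lt u (ltn_ord i)); congr (u _); apply: val_inj. Qed.

Definition count_words n (A : set (cantorT gT)) : nat :=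
  (\sum_(u : {ffun 'I_n -> gT}) `[< A (pad u) >])%N.

Lemma determinedW n m A : (n <= m)%N -> determined n A -> determined m A.
Proof. by move=> le_nm dA x y xy; apply: dA => i lt_in; apply/xy/(leq_trans lt_in). Qed.

Lemma determinedC n A : determined n A -> determined n (~` A).
Proof. by move=> dA x y xy nAx Ay; apply/nAx/(dA y) => // i /xy. Qed.

Lemma count_wordsS n A : determined n A -> count_words n.+1 A = (q * count_words n A)%N.
Proof.
move=> dA.
pose h (p : {ffun 'I_n -> gT} * gT) : {ffun 'I_n.+1 -> gT} :=
  [ffun i => if unlift ord_max i is Some j then p.1 j else p.2].
pose k (u : {ffun 'I_n.+1 -> gT}) := ([ffun j => u (lift ord_max j)], u ord_max).
have hK : cancel k h.
  move=> u; apply/ffunP => i; rewrite ffunE /=.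
  by case: unliftP => [j ->|->]; rewrite ?ffunE.
have kK : cancel h k.
  move=> [v a]; rewrite /k /h /= ffunE unlift_none; congr (_, _).
  by apply/ffunP => j; rewrite !ffunE liftK.
rewrite /count_words (reindex h); last by exists k => x _; [exact: kK|exact: hK].
transitivity (\sum_(v : {ffun 'I_n -> gT}) \sum_(a : gT) `[< A (pad (h (v, a))) >])%N.
  by rewrite pair_big; apply: eq_bigr => -[].
rewrite big_distrr /=; apply: eq_bigr => v _.
rewrite -sum_nat_const; apply: eq_bigr => a _; congr (nat_of_bool _); apply: asbool_equiv_eq.
have pad_h i : (i < n)%N -> pad (h (v, a)) i = pad v i.
  move=> lt_in; have lt_iSn : (i < n.+1)%N := ltnW lt_in.
  rewrite (pad_lt _ lt_in) (pad_lt _ lt_iSn) ffunE.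
  have -> : Ordinal lt_iSn = lift ord_max (Ordinal lt_in).
    by apply: val_inj; rewrite /= /bump leqNgt lt_in.
  by rewrite liftK.
by split; apply: dA => i /pad_h.
Qed.

Lemma count_wordsD n k A :
  determined n A -> count_words (n + k) A = (q ^ k * count_words n A)%N.
Proof.
move=> dA; elim: k => [|k IHk]; first by rewrite addn0 expn0 mul1n.
by rewrite addnS count_wordsS ?IHk ?expnS ?mulnA //; apply: determinedW dA; exact: leq_addr.
Qed.

Definition determined_set (A : set (cantorT gT)) := exists n, determined n A.

Lemma determined_set0 : determined_set set0.
Proof. by exists 0%N. Qed.

Lemma determined_setU : setU_closed determined_set.
Proof.
move=> A B [n dA] [m dB]; exists (maxn n m) => x y xy [Ax|Bx].
  by left; apply: (determinedW (leq_maxl n m) dA) Ax.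
by right; apply: (determinedW (leq_maxr n m) dB) Bx.
Qed.

Lemma determined_setC : setC_closed determined_set.
Proof. by move=> A [n dA]; exists n; exact: determinedC. Qed.

Lemma determined_common (F : nat -> set (cantorT gT)) N :
  (forall i, determined_set (F i)) -> (forall k, (N <= k)%N -> F k = set0) ->
  exists n, forall i, determined n (F i).
Proof.
move=> dF FN.
suff [n dFn] : exists n, forall i, (i < N)%N -> determined n (F i).
  by exists n => i; case: (ltnP i N) => [/dFn //|/FN ->] x y.
elim: N {FN} => [|N [n dFn]]; first by exists 0%N.
have [k dk] := dF N; exists (maxn n k) => i.
rewrite ltnS leq_eqVlt => /orP[/eqP ->|/dFn]; first exact: determinedW (leq_maxr n k) dk.
exact: determinedW (leq_maxl n k).
Qed.

End Determined.

HB.instance Definition _ (gT : finGroupType) :=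
  @isAlgebraOfSets.Build default_measure_display (cantorT gT) (@determined_set gT)
    (@determined_set0 gT) (@determined_setU gT) (@determined_setC gT).

Section Topology.
Variable gT : finGroupType.
Local Notation G := (cantorT gT).

Lemma cylinder_determined n (w : G) : determined n (cylinder n w).
Proof. by move=> x y xy cx i lt_in; rewrite -xy //; exact: cx. Qed.

Lemma cylinderS n (w : G) :
  cylinder n.+1 w = cylinder n w `&` ((fun x : G => x n) @^-1` [set w n]).
Proof.
apply/seteqP; split => x /=.
  by move=> cx; split; [move=> i lt_in; apply/cx/ltnW|apply: cx].
by move=> [cx xn] i; rewrite ltnS leq_eqVlt => /orP[/eqP ->|/cx].
Qed.

Lemma open_cylinder n (w : G) : open (cylinder n w).
Proof.
elim: n => [|n IHn].
  have -> : cylinder 0 w = setT by apply/seteqP; split.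
  exact: openT.
rewrite cylinderS; apply: openI => //; apply: open_comp; last exact: discrete_open.
by move=> x _; exact: (@proj_continuous nat (fun _ => discrete_topology gT) n).
Qed.

Lemma open_determined n (A : set G) : determined n A -> open A.
Proof.
move=> dA; rewrite (_ : A = \bigcup_(x in A) cylinder n x).
  by apply: bigcup_open => x _; exact: open_cylinder.
apply/seteqP; split => [x Ax|y [x Ax cxy]]; first by exists x.
by apply: (dA x) => // i /cxy.
Qed.

Lemma closed_determined n (A : set G) : determined n A -> closed A.
Proof. by move=> dA; rewrite -openC; exact: open_determined (determinedC dA). Qed.

Lemma compact_cantor_group : compact [set: G].
Proof.
have := @tychonoff nat (fun _ => discrete_topology gT) (fun _ => setT)
  (fun _ => @finite_compact (discrete_topology gT) setT (@finite_finset gT setT)).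
by congr (compact _); apply/seteqP; split.
Qed.

Lemma cylinder_sub_open (O : set G) x : open O -> O x -> exists n, cylinder n x `<=` O.
Proof.
move=> oO Ox; apply: contrapT => no_cyl.
have escape n : exists z, cylinder n x z /\ ~ O z.
  apply: contrapT => all_in; apply: no_cyl; exists n => z cz.
  by apply: contrapT => nOz; apply: all_in; exists z.
have [y yP] := choice escape.
have y_cvg : y @ \oo --> (x : G).
  apply/(@pointwise_cvgP nat (discrete_topology gT)) => i.
  by apply/discrete_cvg; exists i.+1 => // n /= lt_in; exact: (proj1 (yP n)) i lt_in.
have [N _ yO] : \forall n \near \oo, O (y n).
  by apply: y_cvg; apply: open_nbhs_nbhs; split.
exact: (proj2 (yP N)) (yO N (leqnn N)).
Qed.

(* Compactness: a determined set is clopen, and a disjoint cover of it by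
   open sets has only finitely many nonempty members. *)
Lemma determined_trivIset_finite (F : nat -> set G) n :
  (forall i, determined_set (F i)) -> determined n (\bigcup_i F i) ->
  trivIset setT F -> exists N, forall k, (N <= k)%N -> F k = set0.
Proof.
move=> dF dU tF.
have cU : compact (\bigcup_i F i).
  exact: subclosed_compact (closed_determined dU) compact_cantor_group _.
rewrite compact_cover in cU.
have [D _ UD] := cU nat setT F
  (fun i _ => let: ex_intro m dm := dF i in open_determined dm) (fun x Ux => Ux).
exists (\max_(i <- finmap.enum_fset D) i).+1 => k ltk.
apply/seteqP; split => // x Fkx.
have [i Di Fix] := UD x (ex_intro2 _ _ k I Fkx).
have ik : i = k by apply: tF => //; exists x.
have : (i <= \max_(i <- finmap.enum_fset D) i)%N.
  exact: (@leq_bigmax_seq _ _ _ (fun i => i)).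
by rewrite ik leqNgt ltk.
Qed.

End Topology.

Section Content.
Local Open Scope ring_scope.
Variables (gT : finGroupType) (R : realType).
Local Notation q := #|gT|.
Local Notation G := (cantorT gT).

Lemma card_expn_neq0 n : (q ^ n)%:R != 0 :> R.
Proof.
have q_gt0 : (0 < q)%N by apply/card_gt0P; exists 1%g.
by rewrite pnatr_eq0 -lt0n expn_gt0 q_gt0.
Qed.

Definition word_density n (A : set G) : R := (count_words n A)%:R / (q ^ n)%:R.

Lemma word_density_indep n m (A : set G) :
  determined n A -> determined m A -> word_density n A = word_density m A.
Proof.
wlog le_nm : n m / (n <= m)%N.
  move=> W dn dm; case: (leqP n m) => [/W|/ltnW/W W']; [exact|by rewrite W'].
move=> dn _; rewrite -(subnKC le_nm) /word_density count_wordsD // expnD !natrM.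
by field; rewrite !card_expn_neq0.
Qed.

Definition cylinder_content (A : set G) : \bar R :=
  (word_density (xget 0%N [set n | determined n A]) A)%:E.

Lemma cylinder_contentE n (A : set G) :
  determined n A -> cylinder_content A = (word_density n A)%:E.
Proof.
move=> dA; rewrite /cylinder_content; case: xgetP => [k -> dk|/(_ n) //].
by rewrite (word_density_indep dk dA).
Qed.

Lemma sum_asbool_disjoint (P : nat -> Prop) m :
  (forall i j, P i -> P j -> i = j) -> (forall i, (m <= i)%N -> ~ P i) ->
  (\sum_(i < m) `[< P i >])%N = `[< exists i, P i >].
Proof.
move=> uP bP; elim: m bP => [|m IHm] bP.
  by rewrite big_ord0 asboolF // => -[i]; exact: bP.
rewrite big_ord_recr /=; case: (asboolP (P m)) => [Pm|nPm].
  rewrite asboolT; last by exists m.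
  rewrite big1 // => i _; rewrite asboolF // => /uP /(_ Pm) eq_im.
  by have := ltn_ord i; rewrite eq_im ltnn.
by rewrite addn0 IHm // => i; rewrite leq_eqVlt => /orP[/eqP <-|/bP].
Qed.

Lemma cylinder_content_sigma_additive : semi_sigma_additive cylinder_content.
Proof.
move=> F dF tF [n0 dU].
have [N FN] := determined_trivIset_finite dF dU tF.
have [n dFn] := determined_common dF FN.
have dUn : determined n (\bigcup_k F k).
  by move=> x y xy [k _ Fkx]; exists k => //; exact: (dFn k x y xy).
rewrite (cylinder_contentE dUn); apply: cvg_near_cst; exists N => // m /= le_Nm.
rewrite big_mkord; under eq_bigr do rewrite (cylinder_contentE (dFn _)).
rewrite sumEFin /word_density -mulr_suml -natr_sum; congr ((_ / _)%:E); congr (_%:R).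
rewrite /count_words exchange_big /=; apply: eq_bigr => u _.
rewrite (@sum_asbool_disjoint (fun i => F i (pad u)) m).
- by congr (nat_of_bool _); apply: asbool_equiv_eq; split=> [[i Fi]|[i _ Fi]]; exists i.
- by move=> i j Fi Fj; apply: tF => //; exists (pad u).
- by move=> i le_mi; rewrite FN //; exact: leq_trans le_Nm le_mi.
Qed.

Lemma cylinder_content0 : cylinder_content set0 = 0.
Proof.
rewrite (@cylinder_contentE 0%N) // /word_density /count_words.
by rewrite big1 ?mul0r // => u _; rewrite asboolF.
Qed.

Lemma cylinder_content_ge0 (A : set G) : (0 <= cylinder_content A)%E.
Proof. by rewrite lee_fin divr_ge0. Qed.

HB.instance Definition _ := isMeasure.Build _ G R cylinder_content
  cylinder_content0 cylinder_content_ge0 cylinder_content_sigma_additive.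

End Content.

Definition haar_space (gT : finGroupType) :=
  g_sigma_algebraType (@measurable _ (cantorT gT)).

Notation haar gT R := (@measure_extension _ (cantorT gT) R (@cylinder_content gT R)).

Lemma ereal_le_invS_eq0 (R : realType) (x : \bar R) :
  (0 <= x)%E -> (forall k : nat, (x <= (k.+1%:R^-1)%:E)%E) -> x = 0%E.
Proof.
case: x => [r r_ge0 le_r| |] //; last by move=> _ /(_ 0%N).
apply/eqP; rewrite eqe; move: r_ge0; rewrite lee_fin le_eqVlt => /orP[/eqP<-//|r_gt0].
have [k] := ltr_add_invr r_gt0; rewrite add0r => lt_kr.
by have := le_r k; rewrite lee_fin leNgt lt_kr.
Qed.

Section Haar.
Variables (gT : finGroupType) (R : realType).
Local Notation q := #|gT|.
Local Notation G := (cantorT gT).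
Local Notation M := (haar_space gT).
Local Notation mu := (haar gT R).

Lemma haar_space_measurableE :
  @measurable _ M = <<s @measurable _ (cantorT gT) >>.
Proof. by []. Qed.

Lemma determined_measurable (A : set M) : determined_set A -> measurable A.
Proof. exact: sub_sigma_algebra. Qed.

Lemma measurable_cylinder n (w : G) : measurable (cylinder n w : set M).
Proof. by apply: determined_measurable; exists n; exact: cylinder_determined. Qed.

Lemma haarE (A : set M) : determined_set A -> mu A = cylinder_content R A.
Proof. by move=> dA; rewrite /measure_extension measurable_mu_extE. Qed.

Lemma count_words_cylinder n (w : G) : count_words n (cylinder n w) = 1%N.
Proof.
rewrite /count_words (bigD1 [ffun i : 'I_n => w i]) //= big1 ?addn0.
  by rewrite asboolT // => i lt_in; rewrite pad_lt ffunE.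
move=> u /eqP uw; rewrite asboolF // => cu; apply: uw; apply/ffunP => i.
by rewrite ffunE -(cu i (ltn_ord i)) pad_ord.
Qed.

Lemma haar_cylinder n (w : G) : mu (cylinder n w) = ((q ^ n)%:R^-1)%:E.
Proof.
rewrite haarE; last by exists n; exact: cylinder_determined.
by rewrite (cylinder_contentE _ (@cylinder_determined _ n w)) /word_density
  count_words_cylinder mul1r.
Qed.

Lemma haar_setT : mu setT = 1%E.
Proof.
have -> : (setT : set M) = cylinder 0 (fun _ => 1%g) by apply/seteqP; split.
by rewrite haar_cylinder expn0 invr1.
Qed.

Lemma borel_set_measurable (B : set G) : borel_set B -> measurable (B : set M).
Proof.
apply: smallest_sub; first exact: sigma_algebra_measurable.
move=> O oO; have -> : O = \bigcup_n [set x : G | cylinder n x `<=` O].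
  apply/seteqP; split => [x Ox|x [n _ cO]]; last exact: cO.
  by have [n cO] := cylinder_sub_open oO Ox; exists n.
apply: bigcupT_measurable => n; apply: determined_measurable; exists n.
by move=> x y xy cxO z cyz; apply: cxO => i lt_in; rewrite cyz // xy.
Qed.

Lemma haar_cylinder_cover_le (ns : nat -> nat) (ws : nat -> G) (e : rat) :
  (forall m, (\sum_(i < m) cylinder_measure gT (ns i) <= e)%R) ->
  (mu (\bigcup_i cylinder (ns i) (ws i)) <= (ratr e)%:E)%E.
Proof.
move=> le_e.
have mcyl i : measurable (cylinder (ns i) (ws i) : set M) := measurable_cylinder _ _.
apply: le_trans (measure_sigma_subadditive _ mcyl (bigcupT_measurable _ mcyl)
  (@subset_refl _ _)) _.
apply: lime_le; first by apply: is_cvg_nneseries => *; exact: measure_ge0.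
apply: nearW => m /=; rewrite big_mkord; under eq_bigr do rewrite haar_cylinder.
rewrite sumEFin lee_fin; have := le_e m; rewrite -(ler_rat R); apply: le_trans.
rewrite /cylinder_measure rmorph_sum.
by under [leRHS]eq_bigr do rewrite fmorphV rmorph_nat.
Qed.

Lemma haar_null_negligible (N : set G) : haar_null N -> mu.-negligible (N : set M).
Proof.
move=> nullN.
have cover k : exists c : (nat -> nat) * (nat -> G),
    N `<=` \bigcup_i cylinder (c.1 i) (c.2 i) /\
    forall m, (\sum_(i < m) cylinder_measure gT (c.1 i) <= (k.+1%:R)^-1)%R.
  by have [ns [ws c]] := nullN k; exists (ns, ws).
have [c cP] := choice cover.
pose C k : set M := \bigcup_i cylinder ((c k).1 i) ((c k).2 i).
have mC k : measurable (C k) by apply: bigcupT_measurable => i; exact: measurable_cylinder.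
exists (\bigcap_k C k); split; first exact: bigcapT_measurable.
  apply: ereal_le_invS_eq0 => [|k]; first exact: measure_ge0.
  apply: (@le_trans _ _ (mu (C k))).
    by apply: le_measure; rewrite ?inE //; [exact: bigcapT_measurable|exact: bigcap_inf].
  have := haar_cylinder_cover_le ((c k).2) (proj2 (cP k)).
  by rewrite fmorphV rmorph_nat.
by move=> x Nx k _; exact: (proj1 (cP k)).
Qed.

End Haar.

Local Open Scope ring_scope.

Lemma measure_eq_negligible_symdiff d (T : measurableType d) (R : realType)
    (mu : {measure set T -> \bar R}) (X Y : set T) :
  measurable X -> measurable Y -> mu.-negligible ((X `\` Y) `|` (Y `\` X)) ->
  mu X = mu Y.
Proof.
move=> mX mY nXY.
have le_mu X' Y' : measurable X' -> measurable Y' -> mu.-negligible (X' `\` Y') ->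
    (mu X' <= mu Y')%E.
  move=> mX' mY' nX'Y'; have mD := measurableD mX' mY'.
  rewrite -(measureU0 mY' mD (measure_negligible mD nX'Y')).
  apply: le_measure; rewrite ?inE //; first exact: measurableU.
  by move=> x X'x; case: (pselect (Y' x)) => Y'x; [left|right].
by apply/eqP; rewrite eq_le !le_mu //; apply: negligibleS nXY => x ?; [right|left].
Qed.

Section Translation.
Variables (gT : finGroupType) (R : realType).
Local Notation G := (cantorT gT).
Local Notation M := (haar_space gT).
Local Notation mu := (haar gT R).

Definition translate (z : G) : M -> M := fun x => gmul x z.

Lemma translate_determined z n (A : set M) :
  determined n A -> determined n (translate z @^-1` A).
Proof. by move=> dA x y xy; apply: dA => i lt_in; rewrite /translate /gmul /= xy. Qed.

Lemma measurable_translate z : measurable_fun setT (translate z).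
Proof.
apply: (@measurability _ _ M M setT (translate z) _ (haar_space_measurableE gT)).
move=> _ [A [n dA] <-].
by rewrite setTI; apply: determined_measurable; exists n; exact: translate_determined.
Qed.

Lemma measurable_preimage_translate z (A : set M) :
  measurable A -> measurable (translate z @^-1` A).
Proof. by move=> mA; rewrite -[X in measurable X]setTI; exact: measurable_translate. Qed.

Lemma count_words_translate z n (A : set M) :
  determined n A -> count_words n (translate z @^-1` A) = count_words n A.
Proof.
move=> dA.
pose h (u : {ffun 'I_n -> gT}) := [ffun i => (u i * z i)%g].
pose h' (u : {ffun 'I_n -> gT}) := [ffun i => (u i * (z i)^-1)%g].
have hK : cancel h h' by move=> u; apply/ffunP => i; rewrite !ffunE mulgK.
rewrite /count_words [RHS](reindex_inj (can_inj hK)) /=; apply: eq_bigr => u _.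
congr (nat_of_bool _); apply: asbool_equiv_eq; split; apply: dA => i lt_in;
  by rewrite /translate /gmul !(pad_lt _ lt_in) ffunE.
Qed.

Section TranslatedHaar.
Variable z : G.

Definition translated_haar (A : set M) : \bar R := mu (translate z @^-1` A).

Let translated_haar0 : translated_haar set0 = 0%E.
Proof. by rewrite /translated_haar preimage_set0 measure0. Qed.

Let translated_haar_ge0 A : (0 <= translated_haar A)%E.
Proof. exact: measure_ge0. Qed.

Let translated_haar_sigma_additive : semi_sigma_additive translated_haar.
Proof.
move=> F mF tF mUF; rewrite /translated_haar preimage_bigcup.
apply: measure_semi_sigma_additive.
- by move=> n; exact: measurable_preimage_translate.
- apply/trivIsetP => /= i j _ _ ij; rewrite -preimage_setI.
  by move/trivIsetP : tF => /(_ _ _ _ _ ij) ->//; rewrite preimage_set0.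
- by rewrite -preimage_bigcup; exact: measurable_preimage_translate.
Qed.

HB.instance Definition _ := isMeasure.Build _ _ _ translated_haar
  translated_haar0 translated_haar_ge0 translated_haar_sigma_additive.

End TranslatedHaar.

Lemma haar_translate z (A : set M) : measurable A -> mu (translate z @^-1` A) = mu A.
Proof.
move=> mA; apply: (measure_unique _ (fun _ => setT) (haar_space_measurableE gT)
  (@measurableI _ (cantorT gT)) _ _ (translated_haar z) mu) => //.
- by apply/seteqP; split => // x _; exists 0%N.
- move=> C [n dC]; change (mu (translate z @^-1` C) = mu C).
  have dzC := translate_determined (z := z) dC.
  rewrite !haarE; try by exists n.
  by rewrite (cylinder_contentE _ dC) (cylinder_contentE _ dzC) /word_density
    count_words_translate.
- move=> k; change (mu (translate z @^-1` setT) < +oo)%E.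
  by rewrite preimage_setT haar_setT ltry.
Qed.

Lemma negligible_translate z (A : set M) :
  mu.-negligible A -> mu.-negligible (translate z @^-1` A).
Proof.
move=> [N [mN N0 AN]]; exists (translate z @^-1` N); split.
- exact: measurable_preimage_translate.
- by rewrite haar_translate.
- by move=> x /AN.
Qed.

End Translation.

Section ZeroOne.
Variables (gT : finGroupType) (R : realType).
Local Notation q := #|gT|.
Local Notation G := (cantorT gT).
Local Notation M := (haar_space gT).
Local Notation mu := (haar gT R).

Definition finitely_supported (z : G) := exists n, forall i, (n <= i)%N -> z i = 1%g.

Lemma measure_cylinder_partition (m : {measure set M -> \bar R}) (D : set M) n :
  measurable D ->
  m D = (\sum_(u : {ffun 'I_n -> gT}) m (D `&` cylinder n (pad u)))%E.
Proof.
move=> mD.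
have partD : D = \bigcup_(u in [set: {ffun 'I_n -> gT}]) (D `&` cylinder n (pad u)).
  apply/seteqP; split => [x Dx|x [u _ []] //].
  by exists [ffun i : 'I_n => x i] => //; split => // i lt_in; rewrite pad_lt ffunE.
rewrite {1}partD measure_fin_bigcup //.
- rewrite (fsbigE (enum {ffun 'I_n -> gT})) ?enum_uniq //; last first.
    by move=> u _; rewrite mem_enum.
  under eq_bigl do rewrite in_setT.
  by rewrite big_enum; apply: eq_bigl.
- exact: (@finite_finset {ffun 'I_n -> gT} setT).
- move=> u v _ _ [x [[_ cu] [_ cv]]]; apply/ffunP => i.
  by rewrite -!pad_ord -(cu i (ltn_ord i)) -(cv i (ltn_ord i)).
- by move=> u _; apply: measurableI => //; exact: measurable_cylinder.
Qed.

Lemma haar_fin_num (A : set M) : measurable A -> mu A = (fine (mu A))%:E.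
Proof.
move=> mA; rewrite fineK // ge0_fin_numE ?measure_ge0 //.
by rewrite (le_lt_trans _ (ltry 1)) // -(haar_setT gT R) le_measure ?inE.
Qed.

Variable B : set M.
Hypothesis mB : measurable B.
Hypothesis B_invariant : forall z, finitely_supported z ->
  mu.-negligible ((B `\` translate z @^-1` B) `|` (translate z @^-1` B `\` B)).

Lemma haar_setI_translate z (C : set M) : finitely_supported z -> measurable C ->
  mu (translate z @^-1` B `&` C) = mu (B `&` C).
Proof.
move=> fz mC; apply: measure_eq_negligible_symdiff.
- by apply: measurableI => //; exact: measurable_preimage_translate.
- exact: measurableI.
- apply: negligibleS (B_invariant fz) => x [[[zBx Cx] nBCx]|[[Bx Cx] nzBCx]].
  + by right; split => // Bx; exact: nBCx.
  + by left; split => // zBx; exact: nzBCx.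
Qed.

Lemma haar_setI_cylinder n (w w' : G) :
  mu (B `&` cylinder n w) = mu (B `&` cylinder n w').
Proof.
pose z : G := fun i => if (i < n)%N then ((w i)^-1 * w' i)%g else 1%g.
have fz : finitely_supported z by exists n => i le_ni; rewrite /z ltnNge le_ni.
have zw : translate z @^-1` cylinder n w' = cylinder n w.
  apply/seteqP; split => x /= cx i lt_in; have := cx i lt_in;
    rewrite /translate /gmul /z lt_in.
    move=> xz; apply/eqP; rewrite eq_mulgV1; apply/eqP.
    by apply: (@mulIg _ (w' i)); rewrite -mulgA xz mul1g.
  by move=> ->; rewrite mulgA mulgV mul1g.
rewrite -[RHS](@haar_translate _ R z); last first.
  by apply: measurableI => //; exact: measurable_cylinder.
by rewrite preimage_setI zw haar_setI_translate //; exact: measurable_cylinder.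
Qed.

(* C is a disjoint union of cylinders of length n, and B meets every such
   cylinder in the same measure. *)
Lemma haar_setI_determined n (C : set M) :
  determined n C -> mu (B `&` C) = ((fine (mu B))%:E * mu C)%E.
Proof.
move=> dC; have mC : measurable C by apply: determined_measurable; exists n.
pose c := fine (mu (B `&` cylinder n (fun _ => 1%g))).
have Bcyl (u : {ffun 'I_n -> gT}) : mu (B `&` cylinder n (pad u)) = c%:E.
  rewrite (haar_setI_cylinder n (pad u) (fun _ => 1%g)) -haar_fin_num //.
  by apply: measurableI => //; exact: measurable_cylinder.
have BC_cyl (u : {ffun 'I_n -> gT}) :
    mu (B `&` C `&` cylinder n (pad u)) = (`[< C (pad u) >]%:R * c)%:E.
  case: (asboolP (C (pad u))) => Cu; rewrite ?mul1r ?mul0r.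
    rewrite -(Bcyl u); congr (mu _); apply/seteqP.
    split=> [x [[Bx _] cx] //|x [Bx cx]]; split=> //; split=> //.
    by apply: (dC (pad u)) => // i /cx ->.
  suff -> : B `&` C `&` cylinder n (pad u) = set0 by rewrite measure0.
  apply/seteqP; split=> // x [[_ Cx] cx]; apply: Cu.
  by apply: (dC x) => // i /cx.
have -> : mu B = ((q ^ n)%:R * c)%:E.
  rewrite (measure_cylinder_partition mu n mB).
  rewrite (eq_bigr (fun=> c%:E)); last by move=> u _; exact: Bcyl.
  by rewrite sumEFin sumr_const card_ffun card_ord mulr_natl.
have -> : mu (B `&` C) = ((count_words n C)%:R * c)%:E.
  rewrite (measure_cylinder_partition mu n (measurableI _ _ mB mC)).
  rewrite (eq_bigr (fun u => (`[< C (pad u) >]%:R * c)%:E)); last first.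
    by move=> u _; exact: BC_cyl.
  by rewrite sumEFin -mulr_suml natr_sum.
rewrite haarE ?(cylinder_contentE _ dC) /word_density /=; last by exists n.
by rewrite -EFinM; congr (_%:E); field; rewrite card_expn_neq0.
Qed.

Lemma haar_setI_indep (C : set M) : measurable C ->
  mu (C `&` B) = ((fine (mu B))%:E * mu C)%E.
Proof.
have muB_ge0 : 0 <= fine (mu B) by apply: fine_ge0; exact: measure_ge0.
move=> mC; apply: (measure_unique _ (fun _ => setT) (haar_space_measurableE gT)
  (@measurableI _ (cantorT gT)) _ _ (mrestr mu mB) (mscale (NngNum muB_ge0) mu)) => //.
- by apply/seteqP; split => // x _; exists 0%N.
- move=> D [n dD]; change (mu (D `&` B) = ((fine (mu B))%:E * mu D)%E).
  by rewrite setIC; exact: haar_setI_determined dD.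
- by move=> k; change (mu (setT `&` B) < +oo)%E; rewrite setTI (haar_fin_num mB) ltry.
Qed.

Lemma haar_zero_one : mu B = 0%E \/ mu B = 1%E.
Proof.
have := haar_setI_indep mB; rewrite setIid (haar_fin_num mB) -EFinM => -[].
set x := fine (mu B) => xx; have : x * (x - 1) = 0 by rewrite mulrBr mulr1 -xx subrr.
by move/eqP; rewrite mulf_eq0 subr_eq0 => /orP[] /eqP ->; [left|right].
Qed.

End ZeroOne.

Section NonMeasurable.
Variables (gT : finGroupType) (R : realType).
Local Notation G := (cantorT gT).
Local Notation M := (haar_space gT).
Local Notation mu := (haar gT R).

Lemma haar_setT_not_negligible : ~ mu.-negligible (setT : set M).
Proof.
move=> nT; have : mu setT = 0%E := measure_negligible measurableT nT.
by rewrite haar_setT => -[] /eqP; rewrite oner_eq0.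
Qed.

Variable H : set G.
Hypothesis H_translate :
  forall z, finitely_supported z -> forall x, H (gmul x z) <-> H x.
Hypothesis H_const_cover : forall x, exists g : gT, H (gmul x (fun _ => g)).
Variable a : gT.
Hypothesis H_const_disjoint : forall x, H x -> ~ H (gmul x (fun _ => a)).

Lemma not_negligible_H : ~ mu.-negligible (H : set M).
Proof.
move=> nH; apply: haar_setT_not_negligible.
have nU : mu.-negligible (\big[setU/set0]_(g : gT) translate (fun _ => g) @^-1` H).
  by apply: big_ind => [|A B|g _];
    [exact: negligible_set0|exact: negligibleU|exact: negligible_translate].
apply: negligibleS nU => x _; have [g Hxg] := H_const_cover x.
by rewrite (bigD1 g) //; left.
Qed.

Lemma not_negligible_setC_H : ~ mu.-negligible (~` H : set M).
Proof.
move=> nCH; apply: haar_setT_not_negligible.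
have nH : mu.-negligible (H : set M).
  by apply: negligibleS (negligible_translate (fun _ => a) nCH) => x /H_const_disjoint.
by apply: negligibleS (negligibleU nH nCH) => x _; case: (pselect (H x)); [left|right].
Qed.

Lemma not_haar_measurable : ~ haar_measurable H.
Proof.
move=> [B [borelB nullHB]].
have mB : measurable (B : set M) := borel_set_measurable borelB.
have nHB : mu.-negligible (((H `\` B) `|` (B `\` H)) : set M).
  exact: haar_null_negligible.
have B_invariant z : finitely_supported z ->
    mu.-negligible ((B `\` translate z @^-1` B) `|` (translate z @^-1` B `\` B)).
  move=> fz; apply: negligibleS (negligibleU nHB (negligible_translate z nHB)).
  move=> x; rewrite /translate /=; have := H_translate fz x.
  by case: (pselect (H x)); case: (pselect (H (gmul x z))); tauto.
have [muB0|muB1] := haar_zero_one mB B_invariant.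
  apply: not_negligible_H.
  apply: negligibleS (negligibleU nHB (proj2 (negligibleP _ mB) muB0)).
  by move=> x Hx; case: (pselect (B x)) => Bx; [right|left; left].
apply: not_negligible_setC_H; have mCB : measurable (~` B : set M) := measurableC mB.
have muCB : mu (~` B) = 0%E.
  have muT_fin : (mu setT < +oo)%E by rewrite haar_setT ltry.
  have : (mu setT - mu (setT `&` B))%E = 0%E by rewrite setTI haar_setT muB1 subee.
  by rewrite -(measureD measurableT mB muT_fin) setTD.
apply: negligibleS (negligibleU nHB (proj2 (negligibleP _ mCB) muCB)).
by move=> x nHx; case: (pselect (B x)) => Bx; [left; right|right].
Qed.

End NonMeasurable.

Definition ultra_subgroup (gT : finGroupType) (U : set_system nat) :
  set (cantor_group gT) := [set x | U [set j | x j = 1%g]].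

Section UltraSubgroup.
Variable gT : finGroupType.
Local Notation G := (cantor_group gT).
Variable U : set_system nat.
Hypothesis U_ultra : UltraFilter U.
Hypothesis U_cofinite : forall m, U [set j | (m <= j)%N].
Local Notation HU := (@ultra_subgroup gT U).

Lemma ultra_subgroup_is_subgroup : is_subgroup HU.
Proof.
split; first by apply: filterS filterT.
split=> [x y Hx Hy|x Hx].
  by apply: filterS (filterI Hx Hy) => j [/= xj yj]; rewrite /gmul xj yj mulg1.
by apply: filterS Hx => j /= xj; rewrite /ginv xj invg1.
Qed.

Lemma ultra_subgroup_dense : dense HU.
Proof.
move=> O [x Ox] oO; have [n cO] := cylinder_sub_open oO Ox.
exists (fun i => if (i < n)%N then x i else 1%g); split.
  by apply: cO => i lt_in; rewrite lt_in.
by apply: filterS (U_cofinite n) => j /= le_nj; rewrite ltnNge le_nj.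
Qed.

Lemma ultra_subgroup_translate z : finitely_supported z ->
  forall x, HU (gmul x z) <-> HU x.
Proof.
move=> [n zn] x; split=> Hx; apply: filterS (filterI Hx (U_cofinite n)) => j [/=].
  by rewrite /gmul => + le_nj; rewrite zn // mulg1.
by rewrite /gmul => xj le_nj; rewrite zn // mulg1.
Qed.

Lemma ultra_const (x : G) : exists g : gT, U [set j | x j = g].
Proof.
apply: contrapT => no_const.
have notU g : U (~` [set j | x j = g]).
  have [Ug|//] := in_ultra_setVsetC [set j | x j = g] U_ultra.
  by exfalso; apply: no_const; exists g.
have : U [set j | x j \notin enum gT].
  elim: (enum gT) => [|g s IHs]; first exact: filterS filterT.
  apply: filterS (filterI IHs (notU g)) => j [/= xs xg].
  by rewrite in_cons negb_or xs andbT; apply/eqP.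
by move/filter_ex => [j]; rewrite /= mem_enum.
Qed.

Lemma ultra_subgroup_const_cover x : exists g : gT, HU (gmul x (fun _ => g)).
Proof.
have [g Ug] := ultra_const x; exists g^-1%g.
by apply: filterS Ug => j /= xj; rewrite /gmul xj mulgV.
Qed.

Lemma ultra_subgroup_const_disjoint a : a != 1%g ->
  forall x, HU x -> ~ HU (gmul x (fun _ => a)).
Proof.
move=> a1 x Hx Hxa; have [j [/= xj]] := filter_ex (filterI Hx Hxa).
by rewrite /gmul xj mul1g => /eqP; rewrite (negbTE a1).
Qed.

End UltraSubgroup.

Lemma injective_nat_unbounded (h : nat -> nat) : injective h ->
  forall m, exists k, (m <= h k)%N.
Proof.
move=> h_inj m; apply: contrapT => bounded.
have lt_hm k : (h k < m)%N by rewrite ltnNge; apply/negP => le_mh; apply: bounded; exists k.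
pose h' (i : 'I_m.+1) : 'I_m := Ordinal (lt_hm i).
have h'_inj : injective h' by move=> i j /(congr1 val) /h_inj /val_inj.
by have := leq_card h' h'_inj; rewrite !card_ord ltnn.
Qed.

Section IndependentFamily.

(* Hausdorff's independent family: a natural number j codes a length n and a
   finite set S of binary words, and lies in [indep_set f] iff the prefix of
   f of length n is in S. *)
Definition word_code := (nat * seq (seq bool))%type.

Definition decode (j : nat) : word_code := odflt (0%N, [::]) (unpickle j).

Definition bit_prefix (f : nat -> bool) n : seq bool := [seq f i | i <- iota 0 n].

Definition indep_set (f : nat -> bool) : set nat :=
  [set j | bit_prefix f (decode j).1 \in (decode j).2].

Lemma nth_bit_prefix f n i : (i < n)%N -> nth false (bit_prefix f n) i = f i.
Proof. by move=> lt_in; rewrite /bit_prefix (nth_map 0%N) ?size_iota // nth_iota. Qed.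

Lemma prefix_separates_from (f : nat -> bool) fs : exists N, forall n, (N <= n)%N ->
  forall g, List.In g fs -> bit_prefix f n = bit_prefix g n -> f = g.
Proof.
elim: fs => [|g fs [N sepN]]; first by exists 0%N.
have [N' sepN'] : exists N', forall n, (N' <= n)%N -> bit_prefix f n = bit_prefix g n -> f = g.
  have [->|nfg] := pselect (f = g); first by exists 0%N.
  have [i fgi] : exists i, f i <> g i.
    apply: contrapT => fg; apply/nfg/funext => i.
    by apply: contrapT => fgi; apply: fg; exists i.
  exists i.+1 => n lt_in pfg; exfalso; apply: fgi.
  by rewrite -(nth_bit_prefix f lt_in) -(nth_bit_prefix g lt_in) pfg.
exists (maxn N N') => n; rewrite geq_max => /andP[le_Nn le_N'n] g' [<-|fsg'].
  exact: sepN'.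
exact: sepN.
Qed.

Lemma prefix_separates fs : exists N, forall n, (N <= n)%N -> forall f g,
  List.In f fs -> List.In g fs -> bit_prefix f n = bit_prefix g n -> f = g.
Proof.
elim: fs => [|f fs [N sepN]]; first by exists 0%N.
have [N' sepN'] := prefix_separates_from f fs.
exists (maxn N N') => n; rewrite geq_max => /andP[le_Nn le_N'n] f1 g1.
move=> [<-|fsf1] [<-|fsg1] pfg //.
- exact: sepN' pfg.
- by apply/esym/(sepN' n le_N'n _ fsf1).
- exact: sepN pfg.
Qed.

Variable P : set (nat -> bool).

Definition good_prefixes n (fs : seq (nat -> bool)) : seq (seq bool) :=
  [seq bit_prefix f n | f <- [seq f <- fs | `[< P f >]]].

Lemma good_prefixesP n fs s : s \in good_prefixes n fs <->
  exists g, [/\ List.In g fs, P g & bit_prefix g n = s].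
Proof.
elim: fs => [|f fs IHfs] /=; first by split => // -[g []].
rewrite /good_prefixes /=; case: (asboolP (P f)) => Pf /=.
  rewrite in_cons; split.
    move=> /orP[/eqP ->|/IHfs [g [fsg Pg pg]]]; first by exists f; split; [left|..].
    by exists g; split; [right|..].
  move=> [g [[<-|fsg] Pg pg]]; first by rewrite pg eqxx.
  by apply/orP; right; apply/IHfs; exists g.
split; first by move=> /IHfs [g [fsg Pg pg]]; exists g; split; [right|..].
by move=> [g [[<-|fsg] Pg pg]] //; apply/IHfs; exists g.
Qed.

Lemma indep_set_realizes fs m : exists j, (m <= j)%N /\
  forall f, List.In f fs -> (indep_set f j <-> P f).
Proof.
have [N sepN] := prefix_separates fs.
pose code k : word_code := ((N + k)%N, good_prefixes (N + k) fs).
have code_inj : injective (pickle \o code).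
  by move=> k k' /(pcan_inj pickleK) [] /eqP; rewrite eqn_add2l => /eqP.
have [k le_mk] := injective_nat_unbounded code_inj m.
exists (pickle (code k)); split => // f fsf.
rewrite /indep_set /decode /= pickleK /=; split.
  move=> /good_prefixesP [g [fsg Pg pg]].
  by rewrite (sepN (N + k)%N (leq_addr _ _) f g fsf fsg (esym pg)).
by move=> Pf; apply/good_prefixesP; exists f.
Qed.

Definition indep_base : set_system nat := [set S | exists fs m,
  [set j | (m <= j)%N /\ forall f, List.In f fs -> (indep_set f j <-> P f)] `<=` S].

Lemma indep_base_proper : ProperFilter indep_base.
Proof.
apply: Build_ProperFilter_ex.
  by move=> S [fs [m sub]]; have [j jP] := indep_set_realizes fs m; exists j; exact: sub.
constructor.
- by exists [::], 0%N.
- move=> S S' [fs [m sub]] [fs' [m' sub']]; exists (fs ++ fs'), (maxn m m').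
  move=> j [+ jP]; rewrite geq_max => /andP[le_mj le_m'j]; split.
    by apply: sub; split => // f fsf; apply: jP; apply: List.in_or_app; left.
  by apply: sub'; split => // f fsf; apply: jP; apply: List.in_or_app; right.
- by move=> S S' SS' [fs [m sub]]; exists fs, m; exact: subset_trans SS'.
Qed.

Definition indep_ultrafilter : set_system nat :=
  projT1 (cid (ultraFilterLemma indep_base_proper)).

Lemma indep_ultrafilter_ultra : UltraFilter indep_ultrafilter.
Proof. exact: (proj1 (projT2 (cid (ultraFilterLemma indep_base_proper)))). Qed.

Lemma indep_ultrafilter_base S : indep_base S -> indep_ultrafilter S.
Proof. exact: (proj2 (projT2 (cid (ultraFilterLemma indep_base_proper)))). Qed.

Lemma indep_ultrafilter_cofinite m : indep_ultrafilter [set j | (m <= j)%N].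
Proof. by apply: indep_ultrafilter_base; exists [::], m => j []. Qed.

Lemma indep_ultrafilter_set f : P f -> indep_ultrafilter (indep_set f).
Proof.
move=> Pf; apply: indep_ultrafilter_base; exists [:: f], 0%N => j [_ jP].
by apply/(jP f); [left|].
Qed.

Lemma indep_ultrafilter_setC f : ~ P f -> indep_ultrafilter (~` indep_set f).
Proof.
move=> nPf; apply: indep_ultrafilter_base; exists [:: f], 0%N => j [_ jP] fj.
by apply: nPf; apply/(jP f); [left|].
Qed.

End IndependentFamily.

Lemma ultra_subgroup_indep_neq (gT : finGroupType) (a : gT) (P Q : set (nat -> bool)) f :
  a != 1%g -> P f -> ~ Q f ->
  @ultra_subgroup gT (indep_ultrafilter P) <> @ultra_subgroup gT (indep_ultrafilter Q).
Proof.
move=> a1 Pf nQf eqPQ.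
have UP := indep_ultrafilter_ultra P; have UQ := indep_ultrafilter_ultra Q.
pose x : cantor_group gT := fun j => if `[< indep_set f j >] then 1%g else a.
have : @ultra_subgroup gT (indep_ultrafilter Q) x.
  rewrite -eqPQ; apply: filterS (indep_ultrafilter_set Pf) => j fj.
  by rewrite /= /x asboolT.
move=> HQx; have [j [/=]] := filter_ex (filterI HQx (indep_ultrafilter_setC nQf)).
by rewrite /x => + nfj; rewrite asboolF // => /eqP; rewrite (negbTE a1).
Qed.

Theorem mainTheorem1 (gT : finGroupType) (hnt : (1 < #|gT|)%N) :
  exists F : set (nat -> bool) -> set (cantor_group gT),
    injective F /\
    forall P : set (nat -> bool),
      is_subgroup (F P) /\ dense (F P) /\ ~ haar_measurable (F P).
Proof.
have [a a1] : exists a : gT, a != 1%g.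
  have [x [y [_ _ xy]]] := card_gt1P hnt.
  by case: (eqVneq x 1%g) => [x1|]; [exists y; rewrite -x1 eq_sym|exists x].
exists (fun P => @ultra_subgroup gT (indep_ultrafilter P)); split.
  move=> P Q eqPQ; apply/funext => f; apply/propext; split=> [Pf|Qf].
    by apply: contrapT => nQf; exact: ultra_subgroup_indep_neq a1 Pf nQf eqPQ.
  by apply: contrapT => nPf; exact: ultra_subgroup_indep_neq a1 Qf nPf (esym eqPQ).
move=> P; have UP := indep_ultrafilter_ultra P; have cofP := indep_ultrafilter_cofinite P.
split; [exact: ultra_subgroup_is_subgroup|split; first exact: ultra_subgroup_dense].
apply: (not_haar_measurable Rdefinitions.R).
- exact: ultra_subgroup_translate.
- exact: ultra_subgroup_const_cover.
- exact: ultra_subgroup_const_disjoint a1.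
Qed.
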